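(* Let $A\in\mathbb{R}^{n\times n}$ be Metzler, $J\in\mathbb{R}^{n\times n}$ be nonnegative and $0<T_{min}\le T_{max}<\infty$. The following statements are equivalent: (a) There exist $\lambda,\mu\in\mathbb{R}^n_{>0}$ such that, with $V(x)=\lambda^\top x$, $V(e^{A\theta}Jx)-V(x)\le-\mu^\top x$ for all $x\in\mathbb{R}^n_{\ge0}$ and all $\theta\in[T_{min},T_{max}]$ (i.e. $V(x(t_{k+1}))-V(x(t_k))\le-\mu^\top x(t_k)$ along trajectories with $T_k\in[T_{min},T_{max}]$). (b) There exists $\lambda\in\mathbb{R}^n_{>0}$ such that $\lambda^\top(e^{A\theta}J-I_n)<0$ for all $\theta\in[T_{min},T_{max}]$. (c) There exist a differentiable $\zeta:[0,T_{max}]\to\mathbb{R}^n$ with $\zeta(0)\in\mathbb{R}^n_{>0}$ and $\varepsilon>0$ such that $\zeta(\tau)^\top A-\dot\zeta(\tau)^\top\le0$ for all $\tau\in[0,T_{max}]$ and $\zeta(\theta)^\top J-\zeta(0)^\top+\varepsilon\mathbf{1}_n^\top\le0$ for all $\theta\in[T_{min},T_{max}]$.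
   Context: Consider the linear impulsive system $\dot x(t)=Ax(t)$ for $t\neq t_k$, $x(t_k^+)=Jx(t_k)$, $x(t_0)=x_0$, where $x(t)\in\mathbb{R}^n$, $x(t^+):=\lim_{s\downarrow t}x(s)$ (left-continuous trajectories), and the impulse times are strictly increasing with $t_k\to\infty$; $T_k:=t_{k+1}-t_k$. A matrix is Metzler if its off-diagonal entries are nonnegative and nonnegative if all entries are nonnegative. Vector inequalities are componentwise; $\mathbf{1}_n$ is the vector of ones. *)

(* classical reals. Matrices are nat -> nat -> R, vectors nat -> R,
   only entries with indices < n are meaningful. *)
From Stdlib Require Import Arith Reals Lra Lia ClassicalEpsilon.
Open Scope R_scope.

Definition Mat := nat -> nat -> R.
Definition Vec := nat -> R.

Fixpoint fsum (n : nat) (f : nat -> R) : R :=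
  match n with O => 0 | S k => fsum k f + f k end.

Definition idm : Mat := fun i j => if Nat.eq_dec i j then 1 else 0.

Definition mmul (n : nat) (A B : Mat) : Mat :=
  fun i j => fsum n (fun k => A i k * B k j).

Definition msub (A B : Mat) : Mat := fun i j => A i j - B i j.

Fixpoint mpow (n : nat) (A : Mat) (k : nat) : Mat :=
  match k with O => idm | S k' => mmul n A (mpow n A k') end.

Definition mvec (n : nat) (M : Mat) (x : Vec) : Vec :=
  fun i => fsum n (fun k => M i k * x k).

Definition vmat (n : nat) (v : Vec) (M : Mat) : Vec :=
  fun j => fsum n (fun i => v i * M i j).

Definition dot (n : nat) (v x : Vec) : R := fsum n (fun i => v i * x i).

(* Matrix exponential e^{A t}: entrywise sum of the series sum_k t^k/k! (A^k)_{ij}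
   (chosen by epsilon; the series always converges). *)
Definition expm (n : nat) (A : Mat) (t : R) : Mat :=
  fun i j => epsilon (inhabits 0)
    (fun l => infinite_sum (fun k => t ^ k / INR (Factorial.fact k) * mpow n A k i j) l).

Definition Metzler (n : nat) (A : Mat) : Prop :=
  forall i j, (i < n)%nat -> (j < n)%nat -> i <> j -> 0 <= A i j.

Definition nonneg_mat (n : nat) (M : Mat) : Prop :=
  forall i j, (i < n)%nat -> (j < n)%nat -> 0 <= M i j.

Definition pos_vec (n : nat) (v : Vec) : Prop := forall i, (i < n)%nat -> 0 < v i.
Definition nonneg_vec (n : nat) (v : Vec) : Prop := forall i, (i < n)%nat -> 0 <= v i.

(* For Metzler A the matrix e^{At} (t >= 0) is entrywise nonnegative, since
   e^{At} = e^{-ct} e^{(A + cI)t} and A + cI >= 0 for c large.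
   (a) <-> (b): V(e^{Aθ}Jx) - V(x) = (λ^T(e^{Aθ}J - I)) x is linear in x, so it is
   negative on the cone exactly when every coefficient is; by continuity and
   compactness of [Tmin, Tmax] the coefficients are then bounded by a uniform -ε.
   (b) -> (c): take ζ(τ)^T = λ^T e^{Aτ}, which solves ζ' = A^T ζ.
   (c) -> (b): take λ = ζ(0); since ζ'^T >= ζ^T A and e^{A(θ-s)} >= 0, the function
   s |-> ζ(s)^T e^{A(θ-s)} is nondecreasing, giving ζ(0)^T e^{Aθ} <= ζ(θ)^T, and
   J >= 0 turns this into ζ(0)^T e^{Aθ} J <= ζ(θ)^T J <= ζ(0)^T - ε 1^T. *)

From Coquelicot Require Import Coquelicot.
From Stdlib Require Import Reals Lra Lia ClassicalEpsilon.
Open Scope R_scope.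

Lemma fsum_ext n f g : (forall k, (k < n)%nat -> f k = g k) -> fsum n f = fsum n g.
Proof.
  induction n as [|n IH]; intros H; simpl; auto.
  rewrite IH, H; auto; intros; apply H; lia.
Qed.

Lemma fsum_zero n : fsum n (fun _ => 0) = 0.
Proof. induction n; simpl; lra. Qed.

Lemma fsum_plus n f g : fsum n (fun k => f k + g k) = fsum n f + fsum n g.
Proof. induction n; simpl; lra. Qed.

Lemma fsum_minus n f g : fsum n (fun k => f k - g k) = fsum n f - fsum n g.
Proof. induction n; simpl; lra. Qed.

Lemma fsum_scal_l n c f : fsum n (fun k => c * f k) = c * fsum n f.
Proof. induction n; simpl; lra. Qed.

Lemma fsum_scal_r n c f : fsum n (fun k => f k * c) = fsum n f * c.
Proof. induction n; simpl; lra. Qed.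

Lemma fsum_const n c : fsum n (fun _ => c) = INR n * c.
Proof. induction n; [simpl; lra|]. cbn [fsum]. rewrite IHn, S_INR; lra. Qed.

Lemma fsum_swap n m (f : nat -> nat -> R) :
  fsum n (fun i => fsum m (fun j => f i j)) = fsum m (fun j => fsum n (fun i => f i j)).
Proof.
  induction n; simpl; [symmetry; apply fsum_zero|].
  rewrite IHn, <- fsum_plus; reflexivity.
Qed.

Lemma fsum_le n f g : (forall k, (k < n)%nat -> f k <= g k) -> fsum n f <= fsum n g.
Proof.
  induction n as [|n IH]; intros H; simpl; [lra|].
  assert (f n <= g n) by (apply H; lia).
  assert (fsum n f <= fsum n g) by (apply IH; intros; apply H; lia).
  lra.
Qed.

Lemma fsum_nonneg n f : (forall k, (k < n)%nat -> 0 <= f k) -> 0 <= fsum n f.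
Proof. intros H. rewrite <- (fsum_zero n). apply fsum_le; auto. Qed.

Lemma fsum_abs n f : Rabs (fsum n f) <= fsum n (fun k => Rabs (f k)).
Proof.
  induction n; simpl; [rewrite Rabs_R0; lra|].
  eapply Rle_trans; [apply Rabs_triang | lra].
Qed.

Lemma fsum_term_le n f k :
  (k < n)%nat -> (forall i, (i < n)%nat -> 0 <= f i) -> f k <= fsum n f.
Proof.
  induction n as [|n IH]; intros Hk H; [lia|]. simpl.
  assert (0 <= f n) by (apply H; lia).
  destruct (Nat.eq_dec k n) as [->|Hkn].
  - assert (0 <= fsum n f) by (apply fsum_nonneg; intros; apply H; lia). lra.
  - assert (f k <= fsum n f) by (apply IH; [lia | intros; apply H; lia]). lra.
Qed.

Lemma idm_sym i j : idm i j = idm j i.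
Proof. unfold idm. destruct (Nat.eq_dec i j), (Nat.eq_dec j i); congruence. Qed.

Lemma idm_nonneg i j : 0 <= idm i j.
Proof. unfold idm. destruct (Nat.eq_dec i j); lra. Qed.

Lemma fsum_idm_l n i f : (i < n)%nat -> fsum n (fun k => idm i k * f k) = f i.
Proof.
  induction n as [|n IH]; intros Hi; [lia|]. simpl. unfold idm at 2.
  destruct (Nat.eq_dec i n) as [->|Hin].
  - rewrite (fsum_ext _ _ (fun _ => 0)), fsum_zero; [lra|].
    intros k Hk. unfold idm. destruct (Nat.eq_dec n k); [lia | lra].
  - rewrite IH by lia. lra.
Qed.

Lemma fsum_idm_r n j f : (j < n)%nat -> fsum n (fun k => f k * idm k j) = f j.
Proof.
  intros Hj. rewrite <- (fsum_idm_l n j f Hj).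
  apply fsum_ext; intros k _. rewrite idm_sym. ring.
Qed.

Lemma mmul_idm_l n M i j : (i < n)%nat -> mmul n idm M i j = M i j.
Proof. exact (fsum_idm_l n i (fun k => M k j)). Qed.

Lemma mmul_idm_r n M i j : (j < n)%nat -> mmul n M idm i j = M i j.
Proof. exact (fsum_idm_r n j (fun k => M i k)). Qed.

Lemma mmul_assoc n M N P i j :
  mmul n (mmul n M N) P i j = mmul n M (mmul n N P) i j.
Proof.
  unfold mmul.
  rewrite (fsum_ext _ _ (fun l => fsum n (fun k => M i k * N k l * P l j)))
    by (intros; rewrite fsum_scal_r; reflexivity).
  rewrite fsum_swap. apply fsum_ext; intros k _.
  rewrite <- fsum_scal_l. apply fsum_ext; intros; ring.
Qed.

Lemma vmat_mmul n v M N j : vmat n v (mmul n M N) j = vmat n (vmat n v M) N j.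
Proof.
  unfold vmat, mmul.
  rewrite (fsum_ext _ (fun k => fsum n (fun i => v i * M i k) * N k j)
             (fun k => fsum n (fun i => v i * M i k * N k j)))
    by (intros; rewrite fsum_scal_r; reflexivity).
  rewrite <- fsum_swap. apply fsum_ext; intros i _.
  rewrite <- fsum_scal_l. apply fsum_ext; intros; ring.
Qed.

Lemma vmat_idm n v j : (j < n)%nat -> vmat n v idm j = v j.
Proof. exact (fsum_idm_r n j v). Qed.

Lemma vmat_msub n v M N j : vmat n v (msub M N) j = vmat n v M j - vmat n v N j.
Proof.
  unfold vmat, msub. rewrite <- fsum_minus. apply fsum_ext; intros; ring.
Qed.

Lemma dot_mvec n v M x : dot n v (mvec n M x) = dot n (vmat n v M) x.
Proof.
  unfold dot, mvec, vmat.
  rewrite (fsum_ext _ (fun j => fsum n (fun i => v i * M i j) * x j)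
             (fun j => fsum n (fun i => v i * M i j * x j)))
    by (intros; rewrite fsum_scal_r; reflexivity).
  rewrite <- fsum_swap. apply fsum_ext; intros i _.
  rewrite <- fsum_scal_l. apply fsum_ext; intros; ring.
Qed.

Lemma dot_minus n u v x : dot n u x - dot n v x = dot n (fun j => u j - v j) x.
Proof. unfold dot. rewrite <- fsum_minus. apply fsum_ext; intros; ring. Qed.

Lemma mpow_S_r n B k i j : (i < n)%nat -> (j < n)%nat ->
  mpow n B (S k) i j = mmul n (mpow n B k) B i j.
Proof.
  revert i j; induction k as [|k IH]; intros i j Hi Hj.
  - simpl. rewrite mmul_idm_r, mmul_idm_l; auto.
  - change (mpow n B (S (S k)) i j) with (mmul n B (mpow n B (S k)) i j).
    unfold mmul at 1. rewrite (fsum_ext _ _ (fun l => B i l * mmul n (mpow n B k) B l j))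
      by (intros; rewrite IH; auto).
    symmetry. apply mmul_assoc.
Qed.

Definition mat_norm n (B : Mat) : R := fsum n (fun a => fsum n (fun b => Rabs (B a b))).

Lemma mat_norm_nonneg n B : 0 <= mat_norm n B.
Proof. apply fsum_nonneg; intros; apply fsum_nonneg; intros; apply Rabs_pos. Qed.

Lemma Rabs_entry_le_mat_norm n B a b : (a < n)%nat -> (b < n)%nat ->
  Rabs (B a b) <= mat_norm n B.
Proof.
  intros Ha Hb. unfold mat_norm.
  eapply Rle_trans; [| apply (fsum_term_le n (fun a => fsum n (fun b => Rabs (B a b))) a Ha)].
  - apply (fsum_term_le n (fun b => Rabs (B a b)) b Hb). intros; apply Rabs_pos.
  - intros; apply fsum_nonneg; intros; apply Rabs_pos.
Qed.

Lemma Rabs_mpow_le n B k i j : (i < n)%nat -> (j < n)%nat ->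
  Rabs (mpow n B k i j) <= (INR n * mat_norm n B + 1) ^ k.
Proof.
  set (K := INR n * mat_norm n B + 1).
  assert (HK : 1 <= K)
    by (pose proof (pos_INR n); pose proof (mat_norm_nonneg n B); unfold K; nra).
  revert i j; induction k as [|k IH]; intros i j Hi Hj.
  - simpl. unfold idm. destruct (Nat.eq_dec i j); rewrite ?Rabs_R1, ?Rabs_R0; lra.
  - change (mpow n B (S k) i j) with (fsum n (fun l => B i l * mpow n B k l j)).
    assert (0 <= K ^ k) by (apply pow_le; lra).
    eapply Rle_trans; [apply fsum_abs|].
    eapply Rle_trans; [apply (fsum_le _ _ (fun _ => mat_norm n B * K ^ k))|].
    + intros l Hl. rewrite Rabs_mult.
      apply Rmult_le_compat; try apply Rabs_pos;
        [apply Rabs_entry_le_mat_norm | apply IH]; auto.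
    + rewrite fsum_const. simpl.
      pose proof (pos_INR n). pose proof (mat_norm_nonneg n B). unfold K in *. nra.
Qed.

Definition expm_coef n (B : Mat) i j k : R := mpow n B k i j / INR (Factorial.fact k).

Lemma expm_coef_radius n B i j x : (i < n)%nat -> (j < n)%nat ->
  Rbar_lt (Rabs x) (CV_radius (expm_coef n B i j)).
Proof.
  intros Hi Hj.
  assert (Hdisk : forall r, CV_disk (expm_coef n B i j) r).
  { intros r. set (K := INR n * mat_norm n B + 1).
    apply (@ex_series_le R_AbsRing R_CompleteNormedModule _
             (fun k => (K * Rabs r) ^ k / INR (Factorial.fact k))).
    - intros k. change (Rabs (Rabs (expm_coef n B i j k * r ^ k))
                          <= (K * Rabs r) ^ k / INR (Factorial.fact k)).
      rewrite Rabs_Rabsolu. unfold expm_coef.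
      rewrite Rabs_mult, Rabs_div by apply INR_fact_neq_0.
      rewrite (Rabs_right (INR _)) by (left; apply INR_fact_lt_0).
      rewrite <- RPow_abs, Rpow_mult_distr. unfold Rdiv.
      assert (Rabs (mpow n B k i j) <= K ^ k) by (apply Rabs_mpow_le; auto).
      assert (0 < / INR (Factorial.fact k)) by (apply Rinv_0_lt_compat, INR_fact_lt_0).
      assert (0 <= Rabs r ^ k) by (apply pow_le, Rabs_pos).
      apply (Rle_trans _ (K ^ k * / INR (Factorial.fact k) * Rabs r ^ k)); [|right; ring].
      apply Rmult_le_compat_r; auto. apply Rmult_le_compat_r; lra.
    - eexists. apply (is_series_ext _ _ _) with (2 := is_exp_Reals (K * Rabs r)).
      intros k. rewrite pow_n_pow. unfold scal; simpl; unfold mult; simpl.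
      unfold Rdiv; ring. }
  destruct (Lub_Rbar_correct (CV_disk (expm_coef n B i j))) as [Hub _].
  specialize (Hub (Rabs x + 1) (Hdisk _)).
  unfold CV_radius. destruct (Lub_Rbar (CV_disk (expm_coef n B i j))); simpl in *; auto. lra.
Qed.

Lemma is_pseries_expm n B t i j : (i < n)%nat -> (j < n)%nat ->
  is_pseries (expm_coef n B i j) t (expm n B t i j).
Proof.
  intros Hi Hj.
  pose proof (PSeries_correct _ _ (CV_radius_inside _ _ (expm_coef_radius n B i j t Hi Hj))) as HP.
  assert (Hs : infinite_sum (fun k => t ^ k / INR (Factorial.fact k) * mpow n B k i j)
                 (PSeries (expm_coef n B i j) t)).
  { apply is_series_Reals. apply (is_series_ext _ _ _) with (2 := HP). intros k.
    rewrite pow_n_pow. change (t ^ k * expm_coef n B i j k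
      = t ^ k / INR (Factorial.fact k) * mpow n B k i j).
    unfold expm_coef, Rdiv. ring. }
  replace (expm n B t i j) with (PSeries (expm_coef n B i j) t); [exact HP|].
  unfold expm. apply (uniqueness_sum (fun k => t ^ k / INR (Factorial.fact k) * mpow n B k i j));
    [exact Hs|]. apply epsilon_spec. eexists. exact Hs.
Qed.

Lemma expm_PSeries n B t i j : (i < n)%nat -> (j < n)%nat ->
  expm n B t i j = PSeries (expm_coef n B i j) t.
Proof. intros Hi Hj. symmetry. apply is_pseries_unique, is_pseries_expm; auto. Qed.

Lemma expm_0 n B i j : (i < n)%nat -> (j < n)%nat -> expm n B 0 i j = idm i j.
Proof. intros Hi Hj. rewrite expm_PSeries, PSeries_0 by auto. unfold expm_coef. simpl. field. Qed.

Lemma is_pseries_fsum m (c : nat -> R) (a : nat -> nat -> R) x (v : nat -> R) :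
  (forall l, (l < m)%nat -> is_pseries (a l) x (v l)) ->
  is_pseries (fun k => fsum m (fun l => c l * a l k)) x (fsum m (fun l => c l * v l)).
Proof.
  induction m as [|m IH]; intros H; simpl.
  - assert (H0 : ex_pseries (fun _ : nat => 0) x)
      by (apply CV_radius_inside; rewrite CV_radius_const_0; exact I).
    pose proof (PSeries_correct _ _ H0) as HP. rewrite PSeries_const_0 in HP. exact HP.
  - assert (H1 := IH (fun l Hl => H l ltac:(lia))).
    assert (H2 : is_pseries (PS_scal (c m) (a m)) x (scal (c m) (v m))).
    { apply (@is_pseries_scal R_AbsRing R_NormedModule); [apply Rmult_comm | apply H; lia]. }
    exact (is_pseries_plus _ _ _ _ _ H1 H2).
Qed.

Lemma PS_derive_expm_coef n B i j k :
  PS_derive (expm_coef n B i j) k = mpow n B (S k) i j / INR (Factorial.fact k).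
Proof.
  unfold PS_derive, expm_coef. rewrite fact_simpl, mult_INR.
  pose proof (INR_fact_neq_0 k). assert (INR (S k) <> 0) by (apply not_0_INR; lia).
  field; auto.
Qed.

Lemma derivable_pt_lim_expm_entry n B i j t d : (i < n)%nat -> (j < n)%nat ->
  is_pseries (PS_derive (expm_coef n B i j)) t d ->
  derivable_pt_lim (fun s => expm n B s i j) t d.
Proof.
  intros Hi Hj Hd. apply is_derive_Reals.
  apply (is_derive_ext (PSeries (expm_coef n B i j))); [intros; symmetry; apply expm_PSeries; auto|].
  rewrite <- (is_pseries_unique _ _ _ Hd).
  apply is_derive_PSeries, expm_coef_radius; auto.
Qed.

Lemma derivable_pt_lim_expm_l n B i j t : (i < n)%nat -> (j < n)%nat ->
  derivable_pt_lim (fun s => expm n B s i j) t (mmul n B (expm n B t) i j).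
Proof.
  intros Hi Hj. apply derivable_pt_lim_expm_entry; auto.
  apply (is_pseries_ext (fun k => fsum n (fun l => B i l * expm_coef n B l j k))).
  - intros k. rewrite PS_derive_expm_coef.
    change (mpow n B (S k) i j) with (fsum n (fun l => B i l * mpow n B k l j)).
    unfold Rdiv. rewrite <- fsum_scal_r. apply fsum_ext; intros. unfold expm_coef, Rdiv. ring.
  - apply is_pseries_fsum. intros l Hl. apply is_pseries_expm; auto.
Qed.

Lemma derivable_pt_lim_expm_r n B i j t : (i < n)%nat -> (j < n)%nat ->
  derivable_pt_lim (fun s => expm n B s i j) t (mmul n (expm n B t) B i j).
Proof.
  intros Hi Hj. apply derivable_pt_lim_expm_entry; auto.
  unfold mmul. rewrite (fsum_ext _ _ (fun l => B l j * expm n B t i l)) by (intros; ring).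
  apply (is_pseries_ext (fun k => fsum n (fun l => B l j * expm_coef n B i l k))).
  - intros k. rewrite PS_derive_expm_coef, mpow_S_r by auto.
    unfold mmul, Rdiv. rewrite <- fsum_scal_r. apply fsum_ext; intros. unfold expm_coef, Rdiv. ring.
  - apply is_pseries_fsum. intros l Hl. apply is_pseries_expm; auto.
Qed.

Lemma derivable_pt_lim_fsum m (f : nat -> R -> R) (d : nat -> R) x :
  (forall l, (l < m)%nat -> derivable_pt_lim (f l) x (d l)) ->
  derivable_pt_lim (fun s => fsum m (fun l => f l s)) x (fsum m d).
Proof.
  induction m as [|m IH]; intros H; simpl; [apply derivable_pt_lim_const|].
  apply (derivable_pt_lim_plus (fun s => fsum m (fun l => f l s)) (f m));
    [apply IH; intros | ]; apply H; lia.
Qed.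

Lemma derivable_pt_lim_mmul n (M N : R -> Mat) (dM dN : nat -> R) s i j :
  (forall l, (l < n)%nat -> derivable_pt_lim (fun u => M u i l) s (dM l)) ->
  (forall l, (l < n)%nat -> derivable_pt_lim (fun u => N u l j) s (dN l)) ->
  derivable_pt_lim (fun u => mmul n (M u) (N u) i j) s
    (fsum n (fun l => dM l * N s l j + M s i l * dN l)).
Proof.
  intros HM HN. apply (derivable_pt_lim_fsum n (fun l u => M u i l * N u l j)).
  intros l Hl. apply (derivable_pt_lim_mult (fun u => M u i l) (fun u => N u l j)); auto.
Qed.

Lemma derivable_pt_lim_reflect f t s l :
  derivable_pt_lim f (t - s) l -> derivable_pt_lim (fun u => f (t - u)) s (- l).
Proof.
  intros H. apply is_derive_Reals. apply is_derive_Reals in H.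
  replace (- l) with (scal (-1) l) by (unfold scal; simpl; unfold mult; simpl; ring).
  apply (is_derive_comp f (fun u => t - u)); [exact H|]. auto_derive; auto; ring.
Qed.

(* Uniqueness for Q' = A Q, Q(0) = I: s |-> e^{As} Q(t - s) has zero derivative. *)
Lemma expm_unique n A (Q : R -> Mat) t :
  0 <= t ->
  (forall s i j, (i < n)%nat -> (j < n)%nat ->
     derivable_pt_lim (fun u => Q u i j) s (mmul n A (Q s) i j)) ->
  (forall i j, (i < n)%nat -> (j < n)%nat -> Q 0 i j = idm i j) ->
  forall i j, (i < n)%nat -> (j < n)%nat -> expm n A t i j = Q t i j.
Proof.
  intros Ht HQ HQ0 i j Hi Hj.
  destruct Ht as [Ht| <-]; [| rewrite expm_0, HQ0; auto].
  set (H := fun s => mmul n (expm n A s) (Q (t - s)) i j).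
  assert (HD : forall s, derivable_pt_lim H s 0).
  { intros s. unfold H.
    replace 0 with (fsum n (fun l => mmul n (expm n A s) A i l * Q (t - s) l j
                      + expm n A s i l * - mmul n A (Q (t - s)) l j)).
    - apply (derivable_pt_lim_mmul n (expm n A) (fun u => Q (t - u))); intros l Hl.
      + apply derivable_pt_lim_expm_r; auto.
      + apply (derivable_pt_lim_reflect (fun u => Q u l j)), HQ; auto.
    - rewrite fsum_plus.
      rewrite (fsum_ext _ (fun l => expm n A s i l * - mmul n A (Q (t - s)) l j)
                 (fun l => -1 * (expm n A s i l * mmul n A (Q (t - s)) l j))) by (intros; ring).
      rewrite fsum_scal_l.
      change (mmul n (mmul n (expm n A s) A) (Q (t - s)) i j
              + -1 * mmul n (expm n A s) (mmul n A (Q (t - s))) i j = 0).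
      rewrite mmul_assoc. ring. }
  destruct (MVT_cor2 H (fun _ => 0) 0 t Ht (fun s _ => HD s)) as [x [Hx _]].
  assert (Hconst : H t = H 0) by lra.
  unfold H in Hconst. rewrite Rminus_diag, Rminus_0_r in Hconst.
  unfold mmul in Hconst.
  rewrite (fsum_ext _ _ (fun l => expm n A t i l * idm l j)) in Hconst
    by (intros; rewrite HQ0; auto).
  rewrite (fsum_ext _ (fun l => expm n A 0 i l * Q t l j) (fun l => idm i l * Q t l j)) in Hconst
    by (intros; rewrite expm_0; auto).
  rewrite fsum_idm_r, fsum_idm_l in Hconst by auto. exact Hconst.
Qed.

Lemma mmul_scal_r n M N c i j :
  mmul n M (fun a b => c * N a b) i j = c * mmul n M N i j.
Proof. unfold mmul. rewrite <- fsum_scal_l. apply fsum_ext; intros; ring. Qed.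

Lemma mmul_shift_l n A c M i j : (i < n)%nat ->
  mmul n (fun a b => A a b + c * idm a b) M i j = mmul n A M i j + c * M i j.
Proof.
  intros Hi. unfold mmul. rewrite <- (fsum_idm_l n i (fun l => M l j)) by auto.
  rewrite <- fsum_scal_l, <- fsum_plus. apply fsum_ext; intros; ring.
Qed.

Lemma expm_shift n A c t i j : 0 <= t -> (i < n)%nat -> (j < n)%nat ->
  expm n A t i j = exp (- c * t) * expm n (fun a b => A a b + c * idm a b) t i j.
Proof.
  set (B := fun a b => A a b + c * idm a b).
  intros Ht. revert i j. apply (expm_unique n A (fun u a b => exp (- c * u) * expm n B u a b) t Ht).
  - intros s i j Hi Hj.
    replace (mmul n A (fun a b => exp (- c * s) * expm n B s a b) i j)
      with ((- c * exp (- c * s)) * expm n B s i j + exp (- c * s) * mmul n B (expm n B s) i j).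
    + apply (derivable_pt_lim_mult (fun u => exp (- c * u)) (fun u => expm n B u i j)).
      * apply is_derive_Reals. auto_derive; auto; ring.
      * apply derivable_pt_lim_expm_l; auto.
    + unfold B. rewrite mmul_scal_r, mmul_shift_l by auto. ring.
  - intros i j Hi Hj. rewrite expm_0 by auto. rewrite Rmult_0_r, exp_0. ring.
Qed.

Lemma mpow_nonneg n B k i j : nonneg_mat n B -> (i < n)%nat -> (j < n)%nat ->
  0 <= mpow n B k i j.
Proof.
  intros HB. revert i j; induction k as [|k IH]; intros i j Hi Hj; [apply idm_nonneg|].
  apply fsum_nonneg. intros l Hl. apply Rmult_le_pos; [apply HB | apply IH]; auto.
Qed.

Lemma expm_nonneg_of_nonneg n B t i j : nonneg_mat n B -> 0 <= t ->
  (i < n)%nat -> (j < n)%nat -> 0 <= expm n B t i j.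
Proof.
  intros HB Ht Hi Hj.
  assert (Hterm : forall k, 0 <= scal (pow_n t k) (expm_coef n B i j k)).
  { intros k. unfold scal; simpl; unfold mult; simpl. rewrite pow_n_pow.
    apply Rmult_le_pos; [apply pow_le; auto|]. unfold expm_coef, Rdiv.
    apply Rmult_le_pos; [apply mpow_nonneg; auto |].
    left; apply Rinv_0_lt_compat, INR_fact_lt_0. }
  assert (Hpart : forall m, 0 <= sum_n (fun k => scal (pow_n t k) (expm_coef n B i j k)) m).
  { induction m; [rewrite sum_O; apply Hterm|].
    rewrite sum_Sn. apply Rplus_le_le_0_compat; [exact IHm | apply Hterm]. }
  assert (Hlim : is_lim_seq (sum_n (fun k => scal (pow_n t k) (expm_coef n B i j k)))
                  (expm n B t i j)) by exact (is_pseries_expm n B t i j Hi Hj).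
  exact (is_lim_seq_le (fun _ => 0) _ 0 _ Hpart (is_lim_seq_const 0) Hlim).
Qed.

Lemma expm_nonneg n A t i j : Metzler n A -> 0 <= t ->
  (i < n)%nat -> (j < n)%nat -> 0 <= expm n A t i j.
Proof.
  intros hA Ht Hi Hj. rewrite (expm_shift n A (mat_norm n A)) by auto.
  apply Rmult_le_pos; [left; apply exp_pos|].
  apply expm_nonneg_of_nonneg; auto. intros a b Ha Hb. unfold idm.
  destruct (Nat.eq_dec a b) as [<-|Hab].
  - pose proof (Rabs_entry_le_mat_norm n A a a Ha Ha).
    pose proof (Rle_abs (- A a a)). rewrite Rabs_Ropp in *. lra.
  - rewrite Rmult_0_r, Rplus_0_r. apply hA; auto.
Qed.

Lemma derivable_pt_lim_of_D_in_interior f df a b x :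
  a < x < b -> D_in f df (fun s => a <= s <= b) x -> derivable_pt_lim f x (df x).
Proof.
  intros Hx HD eps Heps. destruct (HD eps Heps) as [alp [Halp H]].
  assert (Hd : 0 < Rmin alp (Rmin (x - a) (b - x))) by (repeat apply Rmin_pos; lra).
  exists (mkposreal _ Hd). intros h Hh Hlt. simpl in Hlt.
  pose proof (Rmin_l alp (Rmin (x - a) (b - x))).
  pose proof (Rmin_r alp (Rmin (x - a) (b - x))).
  pose proof (Rmin_l (x - a) (b - x)). pose proof (Rmin_r (x - a) (b - x)).
  pose proof (Rle_abs h). pose proof (Rle_abs (- h)). rewrite Rabs_Ropp in *.
  specialize (H (x + h)). simpl in H. unfold R_dist in H.
  replace (x + h - x) with h in H by ring.
  apply H. split; [split; [lra | intro; apply Hh; lra] | lra].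
Qed.

Lemma le_of_continue_in_endpoints f a b :
  a < b ->
  continue_in f (fun s => a <= s <= b) a -> continue_in f (fun s => a <= s <= b) b ->
  (forall c d, a < c -> c <= d -> d < b -> f c <= f d) -> f a <= f b.
Proof.
  intros Hab Ca Cb Hint.
  destruct (Rle_or_lt (f a) (f b)) as [|Hlt]; auto. exfalso.
  set (eps := (f a - f b) / 2).
  destruct (Ca eps ltac:(unfold eps; lra)) as [al1 [Hal1 H1]].
  destruct (Cb eps ltac:(unfold eps; lra)) as [al2 [Hal2 H2]].
  set (r := Rmin (Rmin al1 al2) ((b - a) / 2)).
  assert (Hr : 0 < r) by (unfold r; repeat apply Rmin_pos; lra).
  assert (r <= al1 /\ r <= al2 /\ r <= (b - a) / 2) as (Hr1 & Hr2 & Hr3).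
  { pose proof (Rmin_l (Rmin al1 al2) ((b - a) / 2)). pose proof (Rmin_r (Rmin al1 al2) ((b - a) / 2)).
    pose proof (Rmin_l al1 al2). pose proof (Rmin_r al1 al2). unfold r; lra. }
  assert (Fc : Rabs (f (a + r / 2) - f a) < eps).
  { apply H1. split; [split; [lra | lra] |]. simpl; unfold R_dist.
    rewrite Rabs_right; lra. }
  assert (Fd : Rabs (f (b - r / 2) - f b) < eps).
  { apply H2. split; [split; [lra | lra] |]. simpl; unfold R_dist.
    rewrite Rabs_left; lra. }
  assert (f (a + r / 2) <= f (b - r / 2)) by (apply Hint; lra).
  pose proof (Rle_abs (- (f (a + r / 2) - f a))). pose proof (Rle_abs (f (b - r / 2) - f b)).
  rewrite Rabs_Ropp in *. unfold eps in *. lra.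
Qed.

Lemma D_in_nondecreasing f df a b :
  a < b ->
  (forall x, a <= x <= b -> D_in f df (fun s => a <= s <= b) x) ->
  (forall x, a <= x <= b -> 0 <= df x) -> f a <= f b.
Proof.
  intros Hab HD Hpos.
  apply le_of_continue_in_endpoints; [auto | apply (cont_deriv _ df); apply HD; lra ..|].
  intros c d Hc Hcd Hd. destruct Hcd as [Hcd| <-]; [| lra].
  destruct (MVT_cor2 f df c d Hcd) as [x [Hx Hx2]].
  - intros y Hy. apply (derivable_pt_lim_of_D_in_interior f df a b); [lra | apply HD; lra].
  - assert (0 <= df x) by (apply Hpos; lra). nra.
Qed.

Lemma D_in_fsum m (f d : nat -> R -> R) D x :
  (forall l, (l < m)%nat -> D_in (f l) (d l) D x) ->
  D_in (fun s => fsum m (fun l => f l s)) (fun s => fsum m (fun l => d l s)) D x.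
Proof.
  induction m as [|m IH]; intros H; simpl; [apply Dconst|].
  apply (Dadd D (fun s => fsum m (fun l => d l s)) (d m) (fun s => fsum m (fun l => f l s)) (f m));
    [apply IH; intros |]; apply H; lia.
Qed.

Lemma vmat_expm_0 n A v j : (j < n)%nat -> vmat n v (expm n A 0) j = v j.
Proof.
  intros Hj. unfold vmat. rewrite <- (fsum_idm_r n j v Hj).
  apply fsum_ext; intros; rewrite expm_0; auto.
Qed.

Lemma vmat_nonneg n v M j : nonneg_vec n v -> (forall i, (i < n)%nat -> 0 <= M i j) ->
  0 <= vmat n v M j.
Proof. intros Hv HM. apply fsum_nonneg; intros. apply Rmult_le_pos; auto. Qed.

Lemma vmat_expm_le n A (zeta dzeta : nat -> R -> R) T t k :
  Metzler n A ->
  (forall i, (i < n)%nat -> forall tau, 0 <= tau <= T ->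
     D_in (zeta i) (dzeta i) (fun s => 0 <= s <= T) tau) ->
  (forall tau, 0 <= tau <= T -> forall j, (j < n)%nat ->
     vmat n (fun i => zeta i tau) A j <= dzeta j tau) ->
  0 <= t <= T -> (k < n)%nat ->
  vmat n (fun i => zeta i 0) (expm n A t) k <= zeta k t.
Proof.
  intros hA HD Hsup Ht Hk.
  destruct (Req_dec t 0) as [->|Ht0]; [rewrite vmat_expm_0; auto; lra|].
  set (h := fun s => vmat n (fun l => zeta l s) (expm n A (t - s)) k).
  set (dh := fun s => fsum n (fun l => dzeta l s * expm n A (t - s) l k
                        + zeta l s * - mmul n A (expm n A (t - s)) l k)).
  assert (Hdh : forall s, dh s = vmat n (fun l => dzeta l s - vmat n (fun i => zeta i s) A l)
                                   (expm n A (t - s)) k).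
  { intros s. unfold dh, vmat at 1.
    rewrite (fsum_ext _ (fun l => (dzeta l s - vmat n (fun i => zeta i s) A l) * expm n A (t - s) l k)
               (fun l => dzeta l s * expm n A (t - s) l k
                  - vmat n (fun i => zeta i s) A l * expm n A (t - s) l k)) by (intros; ring).
    rewrite fsum_plus, fsum_minus.
    change (fsum n (fun l => vmat n (fun i => zeta i s) A l * expm n A (t - s) l k))
      with (vmat n (vmat n (fun i => zeta i s) A) (expm n A (t - s)) k).
    rewrite <- vmat_mmul. unfold vmat.
    rewrite (fsum_ext _ (fun l => zeta l s * - mmul n A (expm n A (t - s)) l k)
               (fun l => -1 * (zeta l s * mmul n A (expm n A (t - s)) l k))) by (intros; ring).
    rewrite fsum_scal_l. ring. }
  assert (Hmono : h 0 <= h t).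
  { apply (D_in_nondecreasing h dh 0 t); [lra | |].
    - intros x Hx. apply D_in_fsum. intros l Hl.
      apply (Dmult _ (dzeta l) (fun s => - mmul n A (expm n A (t - s)) l k)
               (zeta l) (fun s => expm n A (t - s) l k)).
      + apply (D_in_imp _ _ (fun s => 0 <= s <= T)); [intros; lra |]. apply HD; auto; lra.
      + apply (D_in_imp _ _ no_cond); [intros; exact I |].
        apply derivable_pt_lim_D_in, (derivable_pt_lim_reflect (fun u => expm n A u l k)).
        apply derivable_pt_lim_expm_l; auto.
    - intros x Hx. rewrite Hdh. apply vmat_nonneg.
      + intros l Hl. pose proof (Hsup x ltac:(lra) l Hl). lra.
      + intros l Hl. apply expm_nonneg; auto; lra. }
  unfold h in Hmono. rewrite Rminus_0_r, Rminus_diag, vmat_expm_0 in Hmono by auto.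
  exact Hmono.
Qed.

Lemma neg_uniform_bound (F : R -> nat -> R) a b n :
  a <= b ->
  (forall j, (j < n)%nat -> forall t, a <= t <= b -> continuity_pt (fun s => F s j) t) ->
  (forall t, a <= t <= b -> forall j, (j < n)%nat -> F t j < 0) ->
  exists eps, 0 < eps /\ forall t, a <= t <= b -> forall j, (j < n)%nat -> F t j <= - eps.
Proof.
  intros Hab. induction n as [|n IH]; intros Hc Hneg.
  - exists 1. split; [lra | intros; lia].
  - destruct IH as [eps [Heps Hb]]; [intros; apply Hc; auto | intros; apply Hneg; auto |].
    destruct (continuity_ab_maj (fun s => F s n) a b Hab (Hc n ltac:(lia))) as [Mx [HM HMx]].
    assert (HFM : F Mx n < 0) by (apply Hneg; auto).
    exists (Rmin eps (- F Mx n)). split; [apply Rmin_pos; lra|].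
    intros t Ht j Hj. pose proof (Rmin_l eps (- F Mx n)). pose proof (Rmin_r eps (- F Mx n)).
    destruct (Nat.eq_dec j n) as [->|Hjn].
    + pose proof (HM t Ht). lra.
    + pose proof (Hb t Ht j ltac:(lia)). lra.
Qed.

Lemma derivable_pt_lim_vmat_expm n A lam t i : (i < n)%nat ->
  derivable_pt_lim (fun s => vmat n lam (expm n A s) i) t (vmat n (vmat n lam (expm n A t)) A i).
Proof.
  intros Hi. rewrite <- vmat_mmul. apply (derivable_pt_lim_fsum n (fun l s => lam l * expm n A s l i)).
  intros l Hl. apply (derivable_pt_lim_scal (fun s => expm n A s l i)), derivable_pt_lim_expm_r; auto.
Qed.

Lemma continuity_pt_vmat_jump_sub_idm n A J lam j t :
  continuity_pt (fun s => vmat n lam (msub (mmul n (expm n A s) J) idm) j) t.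
Proof.
  apply derivable_continuous_pt. eexists.
  apply (derivable_pt_lim_fsum n
           (fun i s => lam i * (fsum n (fun k => expm n A s i k * J k j) - idm i j))).
  intros i Hi. apply (derivable_pt_lim_scal (fun s => fsum n (fun k => expm n A s i k * J k j) - idm i j)).
  apply (derivable_pt_lim_minus _ (fun _ => idm i j)); [| apply derivable_pt_lim_const].
  apply (derivable_pt_lim_fsum n (fun k s => expm n A s i k * J k j)). intros k Hk.
  apply (derivable_pt_lim_scal_right (fun s => expm n A s i k)), derivable_pt_lim_expm_r; auto.
Qed.

Lemma vmat_jump_sub_idm n E J lam j : (j < n)%nat ->
  vmat n lam (msub (mmul n E J) idm) j = vmat n (vmat n lam E) J j - lam j.
Proof. intros Hj. rewrite vmat_msub, vmat_mmul, vmat_idm; auto. Qed.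

Lemma dot_jump_sub n E J lam x :
  dot n lam (mvec n E (mvec n J x)) - dot n lam x
  = dot n (vmat n lam (msub (mmul n E J) idm)) x.
Proof.
  rewrite !dot_mvec, dot_minus. unfold dot.
  apply fsum_ext; intros j Hj. rewrite vmat_jump_sub_idm; auto.
Qed.

Lemma dot_unit n v j : (j < n)%nat -> dot n v (fun k => idm k j) = v j.
Proof. apply fsum_idm_r. Qed.

Definition lyap_decrease n A J Tmin Tmax : Prop :=
  exists lam mu : Vec, pos_vec n lam /\ pos_vec n mu /\
    forall x : Vec, nonneg_vec n x ->
    forall theta, Tmin <= theta <= Tmax ->
      dot n lam (mvec n (expm n A theta) (mvec n J x)) - dot n lam x <= - dot n mu x.

Definition lyap_row n A J Tmin Tmax : Prop :=
  exists lam : Vec, pos_vec n lam /\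
    forall theta, Tmin <= theta <= Tmax ->
    forall j, (j < n)%nat -> vmat n lam (msub (mmul n (expm n A theta) J) idm) j < 0.

Definition lyap_clock n A J Tmin Tmax : Prop :=
  exists (zeta dzeta : nat -> R -> R) (eps : R),
    (forall i, (i < n)%nat -> forall tau, 0 <= tau <= Tmax ->
       D_in (zeta i) (dzeta i) (fun s => 0 <= s <= Tmax) tau) /\
    (forall i, (i < n)%nat -> 0 < zeta i 0) /\
    0 < eps /\
    (forall tau, 0 <= tau <= Tmax -> forall j, (j < n)%nat ->
       vmat n (fun i => zeta i tau) A j - dzeta j tau <= 0) /\
    (forall theta, Tmin <= theta <= Tmax -> forall j, (j < n)%nat ->
       vmat n (fun i => zeta i theta) J j - zeta j 0 + eps <= 0).

Lemma lyap_row_uniform n A J Tmin Tmax lam :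
  Tmin <= Tmax ->
  (forall theta, Tmin <= theta <= Tmax ->
     forall j, (j < n)%nat -> vmat n lam (msub (mmul n (expm n A theta) J) idm) j < 0) ->
  exists eps, 0 < eps /\ forall theta, Tmin <= theta <= Tmax ->
    forall j, (j < n)%nat -> vmat n lam (msub (mmul n (expm n A theta) J) idm) j <= - eps.
Proof.
  intros hT Hneg. apply (neg_uniform_bound (fun t j => vmat n lam (msub (mmul n (expm n A t) J) idm) j));
    auto; intros; apply continuity_pt_vmat_jump_sub_idm.
Qed.

Lemma lyap_row_of_decrease n A J Tmin Tmax :
  lyap_decrease n A J Tmin Tmax -> lyap_row n A J Tmin Tmax.
Proof.
  intros [lam [mu [Hlam [Hmu Hdec]]]]. exists lam. split; auto.
  intros theta Htheta j Hj.
  specialize (Hdec (fun k => idm k j) (fun k _ => idm_nonneg k j) theta Htheta).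
  rewrite dot_jump_sub, !dot_unit in Hdec by auto.
  specialize (Hmu j Hj). lra.
Qed.

Lemma lyap_decrease_of_row n A J Tmin Tmax :
  Tmin <= Tmax -> lyap_row n A J Tmin Tmax -> lyap_decrease n A J Tmin Tmax.
Proof.
  intros hT [lam [Hlam Hrow]].
  destruct (lyap_row_uniform n A J Tmin Tmax lam hT Hrow) as [eps [Heps Hb]].
  exists lam, (fun _ => eps). split; [exact Hlam |]. split; [intros i _; exact Heps |].
  intros x Hx theta Htheta. rewrite dot_jump_sub.
  replace (- dot n (fun _ => eps) x) with (dot n (fun _ => - eps) x)
    by (unfold dot; rewrite !fsum_scal_l; ring).
  apply fsum_le. intros j Hj. apply Rmult_le_compat_r; [apply Hx | apply Hb]; auto.
Qed.

Lemma lyap_clock_of_row n A J Tmin Tmax :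
  Tmin <= Tmax -> lyap_row n A J Tmin Tmax -> lyap_clock n A J Tmin Tmax.
Proof.
  intros hT [lam [Hlam Hrow]].
  destruct (lyap_row_uniform n A J Tmin Tmax lam hT Hrow) as [eps [Heps Hb]].
  exists (fun i t => vmat n lam (expm n A t) i),
         (fun i t => vmat n (vmat n lam (expm n A t)) A i), eps.
  split; [| split; [| split; [| split]]]; auto.
  - intros i Hi tau _. apply (D_in_imp _ _ no_cond); [intros; exact I |].
    apply derivable_pt_lim_D_in, derivable_pt_lim_vmat_expm; auto.
  - intros i Hi. rewrite vmat_expm_0; auto.
  - intros tau _ j _. rewrite Rminus_diag_eq; [lra | reflexivity].
  - intros theta Htheta j Hj. rewrite vmat_expm_0 by auto.
    change (vmat n (vmat n lam (expm n A theta)) J j - lam j + eps <= 0).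
    rewrite <- vmat_jump_sub_idm by auto. pose proof (Hb theta Htheta j Hj). lra.
Qed.

Lemma lyap_row_of_clock n A J Tmin Tmax :
  Metzler n A -> nonneg_mat n J -> 0 <= Tmin ->
  lyap_clock n A J Tmin Tmax -> lyap_row n A J Tmin Tmax.
Proof.
  intros hA hJ hTmin [zeta [dzeta [eps [HD [Hz0 [Heps [Hsup HJ]]]]]]].
  exists (fun i => zeta i 0). split; [exact Hz0 |].
  intros theta Htheta j Hj. rewrite vmat_jump_sub_idm by auto.
  assert (vmat n (vmat n (fun i => zeta i 0) (expm n A theta)) J j
          <= vmat n (fun i => zeta i theta) J j).
  { apply fsum_le. intros k Hk. apply Rmult_le_compat_r; [apply hJ; auto |].
    apply (vmat_expm_le n A zeta dzeta Tmax); auto; [| lra].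
    intros tau Htau l Hl. pose proof (Hsup tau Htau l Hl). lra. }
  pose proof (HJ theta Htheta j Hj). lra.
Qed.

Theorem theorem5 (n : nat) (A J : Mat) (Tmin Tmax : R)
  (hA : Metzler n A) (hJ : nonneg_mat n J)
  (hTmin : 0 < Tmin) (hT : Tmin <= Tmax) :
  ( (* (a) *)
    (exists lam mu : Vec, pos_vec n lam /\ pos_vec n mu /\
      forall x : Vec, nonneg_vec n x ->
      forall theta, Tmin <= theta <= Tmax ->
        dot n lam (mvec n (expm n A theta) (mvec n J x)) - dot n lam x
          <= - dot n mu x)
  <->
    (* (b) *)
    (exists lam : Vec, pos_vec n lam /\
      forall theta, Tmin <= theta <= Tmax ->
      forall j, (j < n)%nat ->
        vmat n lam (msub (mmul n (expm n A theta) J) idm) j < 0) )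
  /\
  ( (* (b) *)
    (exists lam : Vec, pos_vec n lam /\
      forall theta, Tmin <= theta <= Tmax ->
      forall j, (j < n)%nat ->
        vmat n lam (msub (mmul n (expm n A theta) J) idm) j < 0)
  <->
    (* (c) *)
    (exists (zeta dzeta : nat -> R -> R) (eps : R),
      (forall i, (i < n)%nat -> forall tau, 0 <= tau <= Tmax ->
         D_in (zeta i) (dzeta i) (fun s => 0 <= s <= Tmax) tau) /\
      (forall i, (i < n)%nat -> 0 < zeta i 0) /\
      0 < eps /\
      (forall tau, 0 <= tau <= Tmax -> forall j, (j < n)%nat ->
         vmat n (fun i => zeta i tau) A j - dzeta j tau <= 0) /\
      (forall theta, Tmin <= theta <= Tmax -> forall j, (j < n)%nat ->
         vmat n (fun i => zeta i theta) J j - zeta j 0 + eps <= 0)) ).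
Proof.
  split; split.
  - exact (lyap_row_of_decrease n A J Tmin Tmax).
  - exact (lyap_decrease_of_row n A J Tmin Tmax hT).
  - exact (lyap_clock_of_row n A J Tmin Tmax hT).
  - exact (lyap_row_of_clock n A J Tmin Tmax hA hJ (Rlt_le _ _ hTmin)).
Qed.
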